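(* Let $m,n,d,n_0$ be positive integers, $R>0$, $\mathbb{S}^d:=[-R,R]^d$, $x\in\mathbb{R}^{m\times n}$, and let $G:\mathbb{R}^d\to\mathbb{R}^{m\times n}$ be continuous. Assume there exists $z^*\in\mathbb{S}^d$ with $\|x-G(z^* )\|_0\le n_0$. For $\lambda>0$ consider $$(\mathrm{P}_\lambda):\quad \min_{z\in\mathbb{S}^d,\ M\in\mathbb{R}^{m\times n}} \|(\mathbf{1}-M)\odot x-(\mathbf{1}-M)\odot G(z)\|_2^2+\lambda\|M\|_1 ,$$ and let $\hat M(\lambda)$ be any optimal $M$-component of a solution of $(\mathrm{P}_\lambda)$. Let $\tilde n=\min_{z\in\mathbb{S}^d}\|x-G(z)\|_0$, $\tilde{\mathcal{Z}}=\{z\in\mathbb{S}^d:\|x-G(z)\|_0=\tilde n\}$, and $\tilde{\mathcal{M}}:=\{I_{x-G(\tilde z)}:\tilde z\in\tilde{\mathcal{Z}}\}$, so that $\tilde{\mathcal M}\subseteq\{M\in\{0,1\}^{m\times n}:\|M\|_0\le\tilde n\}$. Then $d_\infty(\hat M(\lambda),\tilde{\mathcal{M}})\downarrow 0$ as $\lambda\downarrow 0$. Moreover, there is a finite $\tilde\lambda>0$ such that for every $\lambda\le\tilde\lambda$ there exists $\tilde M\in\tilde{\mathcal{M}}$ with $\tilde M=I_{\hat M(\lambda)}$. If in addition $\tilde{\mathcal{Z}}=\{z^*\}$, then, with $M^*:=I_{x-G(z^* )}$, (i) $\hat M(\lambda)\to M^*$ as $\lambda\downarrow 0$, and (ii)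 $I_{\hat M(\lambda)}=M^*$ for every $\lambda\le\tilde\lambda$.
   Context: For a matrix $T$, $\|T\|_0$ is the number of nonzero entries, and $\|T\|_1,\|T\|_2,\|T\|_\infty$ are computed by treating $T$ as a vector. $I_T$ denotes the nonzero mask of $T$: $(I_T)_{ij}=0$ if $T_{ij}=0$ and $1$ otherwise. $\mathbf{1}$ is the all-ones $m\times n$ matrix and $\odot$ is the entrywise product. For a point $a$ and a set $B$, $d_\infty(a,B):=\inf_{b\in B}\|a-b\|_\infty$. *)

From HB Require Import structures.
From mathcomp Require Import all_boot all_order all_algebra.
From mathcomp Require Import all_classical all_reals all_analysis.
Set Implicit Arguments. Unset Strict Implicit. Unset Printing Implicit Defensive.
Import Order.TTheory GRing.Theory Num.Theory.
Import numFieldNormedType.Exports.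
Local Open Scope classical_set_scope.
Local Open Scope ring_scope.

Section MatrixNorms.
Variables (R : realType) (m n : nat).

Definition l0 (T : 'M[R]_(m, n)) : nat := #|[set ij : 'I_m * 'I_n | T ij.1 ij.2 != 0]|.
Definition l1 (T : 'M[R]_(m, n)) : R := \sum_(i < m) \sum_(j < n) `|T i j|.
Definition l2sq (T : 'M[R]_(m, n)) : R := \sum_(i < m) \sum_(j < n) (T i j) ^+ 2.
Definition linf (T : 'M[R]_(m, n)) : R := \big[Num.max/0]_(i < m) \big[Num.max/0]_(j < n) `|T i j|.
Definition hadamard (A B : 'M[R]_(m, n)) : 'M[R]_(m, n) := map2_mx (fun a b => a * b) A B.
Definition nzmask (T : 'M[R]_(m, n)) : 'M[R]_(m, n) := \matrix_(i, j) (if T i j != 0 then 1 else 0).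
Definition ones : 'M[R]_(m, n) := const_mx 1.
Definition dinf (a : 'M[R]_(m, n)) (B : set 'M[R]_(m, n)) : R :=
  inf [set linf (a - b) | b in B].
End MatrixNorms.

Section Problem.
Variables (R : realType) (m n d : nat) (Rad : R)
  (x : 'M[R]_(m, n)) (G : 'rV[R]_d -> 'M[R]_(m, n)).

Definition box : set 'rV[R]_d := [set z | forall i, `|z ord0 i| <= Rad].

Definition obj (lam : R) (z : 'rV[R]_d) (M : 'M[R]_(m, n)) : R :=
  l2sq (hadamard (ones R m n - M) x - hadamard (ones R m n - M) (G z)) + lam * l1 M.

Definition optimal (lam : R) (z : 'rV[R]_d) (M : 'M[R]_(m, n)) : Prop :=
  box z /\ forall z' M', box z' -> obj lam z M <= obj lam z' M'.

(* Ztilde = {z in S^d : ||x - G z||_0 = ntilde}, ntilde = min_{z in S^d} ||x - G z||_0 *)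
Definition Ztilde : set 'rV[R]_d :=
  [set z | box z /\ forall z', box z' -> (l0 (x - G z) <= l0 (x - G z'))%N].

Definition Mtilde : set 'M[R]_(m, n) := [set nzmask (x - G z) | z in Ztilde].
End Problem.

From HB Require Import structures.
From mathcomp Require Import all_boot all_order all_algebra.
From mathcomp Require Import all_classical all_reals all_analysis.
From mathcomp Require Import ring lra.
Set Implicit Arguments. Unset Strict Implicit. Unset Printing Implicit Defensive.
Import Order.TTheory GRing.Theory Num.Theory.
Import numFieldNormedType.Exports.
Local Open Scope classical_set_scope.
Local Open Scope ring_scope.

(* The objective separates over the entries: for fixed [z], the entry (i, j) of [M]
   costs [((1 - t) r)^2 + lam |t|] with [r = (x - G z) i j], which is minimised by
   [t = 1 - lam / (2 r^2)] if [lam < 2 r^2] and by [t = 0] otherwise. A nonzero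
   minimiser costs at least [lam / 2], and one with [|r| >= e] costs almost [lam].
   By compactness of the box there is a uniform [e > 0] such that every [z] has a
   partner [z'] in the box with [x - G z'] vanishing wherever [|x - G z| < e].
   Since the mask of [x - G z'] costs [lam * ||x - G z'||_0], for small [lam] the
   optimality of [(z, M)] forces the entries with [|r| >= e] to be exactly the
   support of [x - G z'], [M] to vanish elsewhere, and [z'] to minimise
   [||x - G _||_0]; on that support [M] is within [lam / (2 e^2)] of [1]. *)

Section EntryCost.
Variable R : realType.
Implicit Types lam t s r e : R.

Lemma sqr_le_of_le_norm e r : 0 <= e -> e <= `|r| -> e ^+ 2 <= r ^+ 2.
Proof. by move=> e_ge0 e_le; rewrite -(real_normK (num_real r)) !expr2 ler_pM. Qed.

Definition entry_cost lam t r := ((1 - t) * r) ^+ 2 + lam * `|t|.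

Lemma entry_cost_ge0 lam t r : 0 <= lam -> 0 <= entry_cost lam t r.
Proof. by move=> lam_ge0; rewrite addr_ge0 ?sqr_ge0 ?mulr_ge0. Qed.

Lemma entry_cost_argmin_eq0 lam t r : 0 < lam -> 2 * r ^+ 2 <= lam ->
  (forall s, entry_cost lam t r <= entry_cost lam s r) -> t = 0.
Proof.
move=> lam_gt0 r_small /(_ 0); rewrite /entry_cost subr0 mul1r normr0 mulr0 addr0.
rewrite exprMn; set a := r ^+ 2 => opt.
have a_ge0 : 0 <= a by exact: sqr_ge0.
have t_le : t <= `|t| := ler_norm t.
have at2_ge0 : 0 <= a * t ^+ 2 by rewrite mulr_ge0 ?sqr_ge0.
have gap_ge0 : 0 <= a * (`|t| - t) by rewrite mulr_ge0 // subr_ge0.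
have excess_ge0 : 0 <= (lam - 2 * a) * `|t| by rewrite mulr_ge0 // subr_ge0.
have : a * t ^+ 2 + 2 * (a * (`|t| - t)) + (lam - 2 * a) * `|t| <= 0 by nra.
have [a_eq0 | a_neq0] := eqVneq a 0.
  move=> _; apply/normr0_eq0/eqP; rewrite eq_le normr_ge0 andbT.
  by rewrite -(ler_pM2l lam_gt0) mulr0; move: opt; rewrite a_eq0; lra.
move=> sum_le0; have : a * t ^+ 2 = 0 by lra.
by move/eqP; rewrite mulf_eq0 (negPf a_neq0) sqrf_eq0 => /eqP.
Qed.

Lemma entry_cost_argmin lam t r : 0 < lam -> lam < 2 * r ^+ 2 ->
  (forall s, entry_cost lam t r <= entry_cost lam s r) ->
  t = 1 - lam / (2 * r ^+ 2).
Proof.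
move=> lam_gt0 lam_lt /(_ (1 - lam / (2 * r ^+ 2))); rewrite /entry_cost !exprMn.
set a := r ^+ 2 in lam_lt *; set q := lam / (2 * a).
have a_gt0 : 0 < a by lra.
have qa : q * (2 * a) = lam by rewrite /q mulfVK // gt_eqF // mulr_gt0.
have q_lt1 : q < 1 by nra.
have q_gt0 : 0 < q by rewrite /q divr_gt0 // mulr_gt0.
rewrite (_ : 1 - (1 - q) = q); last by ring.
rewrite [`|1 - q|]ger0_norm; last by lra.
have lam_t : lam * t <= lam * `|t| by rewrite ler_pM2l // ler_norm.
move=> opt; have : a * (1 - t - q) ^+ 2 <= 0.
  have -> : a * (1 - t - q) ^+ 2 = a * (1 - t) ^+ 2 - lam * (1 - t) + a * q ^+ 2.
    by rewrite -qa; ring.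
  have : a * q ^+ 2 * 2 = lam * q by rewrite -qa; ring.
  lra.
rewrite pmulr_rle0 // => sq_le0.
suff : 1 - t - q = 0 by lra.
by apply/eqP; rewrite -sqrf_eq0 eq_le sq_le0 sqr_ge0.
Qed.

Lemma entry_cost_argmin_value lam r : 0 < lam -> lam < 2 * r ^+ 2 ->
  entry_cost lam (1 - lam / (2 * r ^+ 2)) r = lam - lam ^+ 2 / (4 * r ^+ 2).
Proof.
move=> lam_gt0 lam_lt; have a_gt0 : 0 < r ^+ 2 by lra.
have q_le1 : lam / (2 * r ^+ 2) <= 1.
  by rewrite ler_pdivrMr ?mul1r ?ltW // mulr_gt0.
rewrite /entry_cost ger0_norm ?subr_ge0 //.
by field; rewrite -sqrf_eq0 gt_eqF.
Qed.

Lemma entry_cost_argmin_ge_half lam t r : 0 < lam ->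
  (forall s, entry_cost lam t r <= entry_cost lam s r) -> t != 0 ->
  lam / 2 <= entry_cost lam t r.
Proof.
move=> lam_gt0 opt; have [r_small /eqP|lam_lt _] := leP (2 * r ^+ 2) lam.
  by rewrite (entry_cost_argmin_eq0 lam_gt0 r_small opt).
rewrite (entry_cost_argmin lam_gt0 lam_lt opt) entry_cost_argmin_value //.
have a_gt0 : 0 < r ^+ 2 by lra.
suff : lam ^+ 2 / (4 * r ^+ 2) <= lam / 2 by lra.
have -> : lam ^+ 2 / (4 * r ^+ 2) = lam / 2 * (lam / (2 * r ^+ 2)).
  by field; rewrite -sqrf_eq0 gt_eqF.
by rewrite ler_piMr ?divr_ge0 ?ltW // ltr_pdivrMr ?mul1r //; lra.
Qed.

Lemma entry_cost_argmin_ge lam t r e : 0 < lam -> 0 < e -> lam <= e ^+ 2 -> e <= `|r| ->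
  (forall s, entry_cost lam t r <= entry_cost lam s r) ->
  lam - lam ^+ 2 / (4 * e ^+ 2) <= entry_cost lam t r.
Proof.
move=> lam_gt0 e_gt0 lam_le e_le opt.
have e2_le := sqr_le_of_le_norm (ltW e_gt0) e_le.
have lam_lt : lam < 2 * r ^+ 2 by lra.
rewrite (entry_cost_argmin lam_gt0 lam_lt opt) entry_cost_argmin_value // lerD2l lerN2.
have e2_gt0 : 0 < e ^+ 2 by exact: exprn_gt0.
by rewrite ler_pM2l ?exprn_gt0 // lef_pV2 ?posrE; lra.
Qed.

End EntryCost.

Lemma near_nonzero_entries_half (R : realType) (T : topologicalType) (m n : nat)
    (f : T -> 'M[R]_(m, n)) (z0 : T) : {for z0, continuous f} ->
  \forall z \near z0, forall p : 'I_m * 'I_n,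
    f z0 p.1 p.2 != 0 -> `|f z0 p.1 p.2| / 2 < `|f z p.1 p.2|.
Proof.
move=> f_cont; apply: filter_forall => p.
have [->|nz] := eqVneq (f z0 p.1 p.2) 0; first by near=> z.
have entry_cvg : (fun z => f z p.1 p.2) @ z0 --> f z0 p.1 p.2.
  by apply: (cvg_comp f (fun M => M p.1 p.2)) f_cont _; exact: coord_continuous.
have half_gt0 : 0 < `|f z0 p.1 p.2| / 2 by rewrite divr_gt0 ?normr_gt0.
near=> z => _.
have := ler_distD (f z p.1 p.2) (f z0 p.1 p.2) 0; rewrite !subr0.
have : `|f z0 p.1 p.2 - f z p.1 p.2| < `|f z0 p.1 p.2| / 2.
  by near: z; exact: cvgr_dist_lt entry_cvg _ half_gt0.
lra.
Unshelve. all: by end_near.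
Qed.

(* Near each [z0], any [e] below half the smallest nonzero entry of [f z0] works
   ([near_nonzero_entries_half]); compactness makes such an [e] uniform. *)
Lemma compact_small_entries_vanish (R : realType) (T : topologicalType) (m n : nat)
    (K : set T) (f : T -> 'M[R]_(m, n)) :
  compact K -> continuous f -> exists2 e : R, 0 < e &
  forall z, K z -> exists2 z', K z' & forall i j, `|f z i j| < e -> f z' i j = 0.
Proof.
move=> /compact_near_coveringP cover f_cont.
pose vanish e z := exists2 z', K z' & forall i j, `|f z i j| < e -> f z' i j = 0.
have : \forall e \near (0 : R)^'+, K `<=` vanish e.
  apply: cover => z0 Kz0; have stay_large := near_nonzero_entries_half (f_cont z0).
  have threshold_small : \forall e \near (0 : R)^'+, forall p : 'I_m * 'I_n,
      f z0 p.1 p.2 != 0 -> e <= `|f z0 p.1 p.2| / 2.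
    apply: filter_forall => p.
    have [->|nz] := eqVneq (f z0 p.1 p.2) 0; first by near=> e.
    by near do move=> _; apply: nbhs_right_le; rewrite divr_gt0 ?normr_gt0.
  near=> z e; exists z0 => // i j /= small; apply/eqP/negPn/negP => nz.
  have : `|f z0 i j| / 2 < `|f z i j| by apply: (near stay_large z _ (i, j) nz).
  have : e <= `|f z0 i j| / 2 by apply: (near threshold_small e _ (i, j) nz).
  lra.
move=> near_vanish; near (0 : R)^'+ => e.
exists e; first by near: e; exact: nbhs_right_gt.
by near: e.
Unshelve. all: by end_near.
Qed.

Lemma card_from_cost_bound (R : realType) (lam e : R) (N s b k : nat) :
  0 < lam -> 0 < e -> lam * (N%:R + 1) <= e ^+ 2 -> (s <= N)%N ->
  (lam - lam ^+ 2 / (4 * e ^+ 2)) *+ s + (lam / 2) *+ b <= lam *+ k ->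
  (2 * s + b <= 2 * k)%N.
Proof.
move=> lam_gt0 e_gt0 lam_small sN.
rewrite -[_ *+ s]mulr_natr -[_ *+ b]mulr_natr -[_ *+ k]mulr_natr => cost_le.
have e2_gt0 : 0 < e ^+ 2 by exact: exprn_gt0.
set q := lam / (4 * e ^+ 2) in cost_le.
have q_gt0 : 0 < q by rewrite divr_gt0 // mulr_gt0.
have lam_q : lam ^+ 2 / (4 * e ^+ 2) = lam * q by rewrite /q expr2 mulrA.
have qN : q * (N%:R + 1) <= 1 / 4.
  by rewrite /q mulrAC ler_pdivrMr ?mulr_gt0 //; lra.
have qs : q * s%:R <= q * N%:R by rewrite ler_pM2l // ler_nat.
have cost_le' : s%:R - q * s%:R + b%:R / 2 <= k%:R :> R.
  by rewrite -(ler_pM2l lam_gt0); move: cost_le; rewrite lam_q; lra.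
suff : (2 * s + b)%:R < (2 * k)%:R + 1 :> R by rewrite natr1 ltr_nat ltnS.
rewrite natrD !natrM; lra.
Qed.

Section MatrixDistances.
Variables (R : realType) (m n : nat).

Lemma l0E (T : 'M[R]_(m, n)) :
  l0 T = #|[pred p : 'I_m * 'I_n | T p.1 p.2 != 0]|.
Proof. by apply: eq_card => p; rewrite inE; apply/idP/idP => [/set_mem|/mem_set]. Qed.

Lemma nzmaskE (T : 'M[R]_(m, n)) i j :
  nzmask T i j = if T i j != 0 then 1 else 0.
Proof. exact: mxE. Qed.

Lemma linf_ge0 (A : 'M[R]_(m, n)) : 0 <= linf A.
Proof.
rewrite /linf; elim/big_ind: _ => // [a b a_ge0 b_ge0|i _]; first by rewrite le_max a_ge0.
by elim/big_ind: _ => // a b a_ge0 b_ge0; rewrite le_max a_ge0.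
Qed.

Lemma linf_le (A : 'M[R]_(m, n)) c :
  0 <= c -> (forall i j, `|A i j| <= c) -> linf A <= c.
Proof. by move=> c_ge0 A_le; apply: bigmax_le => // i _; exact: bigmax_le. Qed.

Lemma mx_norm_le (A : 'M[R]_(m, n)) c :
  0 <= c -> (forall i j, `|A i j| <= c) -> `|A| <= c.
Proof. by move=> c_ge0 A_le; rewrite [leLHS]mx_normrE; apply: bigmax_le. Qed.

Lemma dinf_ge0 (a : 'M[R]_(m, n)) (B : set 'M[R]_(m, n)) : B !=set0 -> 0 <= dinf a B.
Proof.
move=> [b Bb]; apply: lb_le_inf; first by exists (linf (a - b)), b.
by move=> _ [b' _ <-]; exact: linf_ge0.
Qed.

Lemma dinf_le_linf (a b : 'M[R]_(m, n)) (B : set 'M[R]_(m, n)) :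
  B b -> dinf a B <= linf (a - b).
Proof.
move=> Bb; apply: ge_inf; last by exists b.
by exists 0 => _ [b' _ <-]; exact: linf_ge0.
Qed.

End MatrixDistances.

Lemma cvg_at_right0_of_dist_le (R : realType) (V : normedModType R)
    (f : R -> V) (l : V) (C : R) :
  (\forall lam \near 0^'+, `|l - f lam| <= lam * C) -> f @ 0^'+ --> l.
Proof.
move=> f_near; apply/cvgrPdist_lt => eps eps_gt0.
have C1_gt0 : 0 < `|C| + 1 by rewrite ltr_pwDr ?normr_ge0.
near=> lam; apply: le_lt_trans (near f_near lam _) _ => //.
have lam_gt0 : 0 < lam by near: lam; exact: nbhs_right_gt.
have : lam < eps / (`|C| + 1) by near: lam; exact: nbhs_right_lt (divr_gt0 _ _).
rewrite ltr_pdivlMr // => lam_lt.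
have : lam * C <= lam * `|C| by rewrite ler_pM2l // ler_norm.
nra.
Unshelve. all: by end_near.
Qed.

Section Problem.
Variables (R : realType) (m n d : nat) (Rad : R).
Variables (x : 'M[R]_(m, n)) (G : 'rV[R]_d -> 'M[R]_(m, n)).

Lemma box_compact : compact (box Rad : set 'rV[R]_d).
Proof.
have -> : box Rad = [set v : 'rV[R]_d | forall i, `[- Rad, Rad]%classic (v ord0 i)].
  by apply/seteqP; split => v /= v_box i; have := v_box i; rewrite /= in_itv /= ler_norml.
apply: (@rV_compact _ _ (fun=> `[- Rad, Rad]%classic)) => i; exact: segment_compact.
Qed.

Lemma obj_entrywise lam z M : obj x G lam z M =
  \sum_(p : 'I_m * 'I_n) entry_cost lam (M p.1 p.2) ((x - G z) p.1 p.2).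
Proof.
rewrite /obj /l2sq /l1 !pair_bigA /= mulr_sumr -big_split /=.
by apply: eq_bigr => p _; rewrite /entry_cost /hadamard /ones !mxE; ring.
Qed.

Lemma optimal_entry_argmin lam z M : optimal Rad x G lam z M ->
  forall p t, entry_cost lam (M p.1 p.2) ((x - G z) p.1 p.2) <=
              entry_cost lam t ((x - G z) p.1 p.2).
Proof.
move=> [z_box opt] p t.
pose M' := \matrix_(i, j) if (i, j) == p then t else M i j.
have := opt z M' z_box; rewrite !obj_entrywise (bigD1 p) // [leRHS](bigD1 p) //=.
rewrite /M' mxE -surjective_pairing eqxx.
under [X in _ <= _ + X]eq_bigr => q /negPf q_neq do rewrite mxE -surjective_pairing q_neq.
by rewrite lerD2r.
Qed.

Lemma obj_nzmask lam z : obj x G lam z (nzmask (x - G z)) = lam *+ l0 (x - G z).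
Proof.
rewrite obj_entrywise l0E -sumr_const [RHS]big_mkcond /=; apply: eq_bigr => p _.
rewrite mxE !inE /entry_cost /=; case: eqP => [->|_] /=.
  by rewrite mulr0 expr0n /= normr0 mulr0 addr0.
by rewrite subrr mul0r expr0n /= normr1 mulr1 add0r.
Qed.

Lemma optimal_obj_le lam z M z' : optimal Rad x G lam z M -> box Rad z' ->
  obj x G lam z M <= lam *+ l0 (x - G z').
Proof. by move=> [_ opt] z'_box; rewrite -obj_nzmask; exact: opt. Qed.

Section SmallLambda.
Variables (lam e : R) (z zt : 'rV[R]_d) (M : 'M[R]_(m, n)).
Hypotheses (lam_gt0 : 0 < lam) (e_gt0 : 0 < e).
Hypothesis lam_small : lam * (#|{: 'I_m * 'I_n}|%:R + 1) <= e ^+ 2.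
Hypothesis M_opt : optimal Rad x G lam z M.
Hypothesis zt_box : box Rad zt.
Hypothesis zt_vanish : forall i j, `|(x - G z) i j| < e -> (x - G zt) i j = 0.

Let large := [pred p : 'I_m * 'I_n | e <= `|(x - G z) p.1 p.2|].
Let spurious := [pred p : 'I_m * 'I_n | (M p.1 p.2 != 0) && (`|(x - G z) p.1 p.2| < e)].
Let support_zt := [pred p : 'I_m * 'I_n | (x - G zt) p.1 p.2 != 0].

Let lam_le : lam <= e ^+ 2.
Proof.
apply: le_trans lam_small; rewrite mulrDr mulr1 lerDr.
exact: mulr_ge0 (ltW lam_gt0) (ler0n _ _).
Qed.

Lemma obj_ge_large_spurious :
  (lam - lam ^+ 2 / (4 * e ^+ 2)) *+ #|large| + (lam / 2) *+ #|spurious|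
    <= obj x G lam z M.
Proof.
rewrite obj_entrywise -!sumr_const big_mkcond [X in _ + X]big_mkcond -big_split /=.
apply: ler_sum => p _.
have argmin := optimal_entry_argmin M_opt p.
rewrite !inE; have [e_le|r_lt] := leP e `|(x - G z) p.1 p.2|.
  by rewrite andbF addr0; exact: entry_cost_argmin_ge lam_gt0 e_gt0 lam_le e_le argmin.
rewrite andbT add0r; case: ifPn => [M_nz|_].
  exact: entry_cost_argmin_ge_half lam_gt0 argmin M_nz.
exact: entry_cost_ge0 (ltW lam_gt0).
Qed.

Lemma card_large_spurious z' : box Rad z' ->
  (2 * #|large| + #|spurious| <= 2 * l0 (x - G z'))%N.
Proof.
move=> z'_box; apply: (card_from_cost_bound lam_gt0 e_gt0 lam_small (max_card _)).
exact: le_trans obj_ge_large_spurious (optimal_obj_le M_opt z'_box).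
Qed.

Lemma large_eq_support : large =i support_zt /\ #|spurious| = 0%N.
Proof.
have sub : support_zt \subset large.
  apply/fintype.subsetP => p; rewrite !inE; apply: contraR; rewrite -ltNge => r_lt.
  by apply/eqP; exact: zt_vanish.
have := card_large_spurious zt_box; rewrite l0E -/support_zt.
have := subset_leq_card sub => card_le card_ge.
have card_eq : #|support_zt| = #|large|.
  apply/anti_leq; rewrite card_le -(leq_pmul2l (isT : 0 < 2)%N).
  exact: leq_trans (leq_addr _ _) card_ge.
split; first by move=> p; apply/esym; move: p; apply/(subset_cardP card_eq).
by apply/eqP; rewrite -leqn0 -(leq_add2l (2 * #|large|)) addn0 -{2}card_eq.
Qed.

Lemma large_entry i j : e <= `|(x - G z) i j| ->
  `|1 - M i j| <= lam / (2 * e ^+ 2) /\ (x - G zt) i j != 0.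
Proof.
move=> e_le; split; last by have [/(_ (i, j))] := large_eq_support; rewrite !inE /= e_le.
have e2_gt0 : 0 < e ^+ 2 by exact: exprn_gt0.
have e2_le := sqr_le_of_le_norm (ltW e_gt0) e_le.
have r2_gt0 := lt_le_trans e2_gt0 e2_le.
rewrite (entry_cost_argmin lam_gt0 _ (optimal_entry_argmin M_opt (i, j))) /=; last first.
  by move: lam_gt0 lam_le; lra.
rewrite subKr ger0_norm; last by rewrite ltW // divr_gt0 // mulr_gt0.
by rewrite ler_pM2l // lef_pV2 ?posrE; lra.
Qed.

Lemma small_entry i j : `|(x - G z) i j| < e -> M i j = 0 /\ (x - G zt) i j = 0.
Proof.
move=> r_lt; split; last exact: zt_vanish.
have [_ /card0_eq /(_ (i, j))] := large_eq_support.
by rewrite !inE /= r_lt andbT => /negbFE/eqP.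
Qed.

Lemma optimal_in_Ztilde : Ztilde Rad x G zt.
Proof.
split=> // z' z'_box; have [large_eq _] := large_eq_support.
rewrite [l0 (x - G zt)]l0E -/support_zt -(eq_card large_eq).
rewrite -(leq_pmul2l (isT : (0 < 2)%N)).
exact: leq_trans (leq_addr _ _) (card_large_spurious z'_box).
Qed.

Lemma nzmask_optimal : nzmask M = nzmask (x - G zt).
Proof.
apply/matrixP => i j; rewrite !nzmaskE; have [e_le|r_lt] := leP e `|(x - G z) i j|.
  have [M_near1 ->] := large_entry e_le; rewrite ifT //; apply: contraTneq M_near1 => ->.
  rewrite subr0 normr1 -ltNge ltr_pdivrMr ?mulr_gt0 ?exprn_gt0 //.
  by move: lam_le lam_gt0; lra.
by have [-> ->] := small_entry r_lt; rewrite eqxx.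
Qed.

Lemma optimal_dist_nzmask i j :
  `|M i j - nzmask (x - G zt) i j| <= lam / (2 * e ^+ 2).
Proof.
rewrite nzmaskE; have [e_le|r_lt] := leP e `|(x - G z) i j|.
  by have [M_near1 ->] := large_entry e_le; rewrite distrC.
have [-> ->] := small_entry r_lt; rewrite eqxx subrr normr0.
by rewrite divr_ge0 ?mulr_ge0 ?sqr_ge0 ?ltW.
Qed.

End SmallLambda.

Lemma small_lambda_recovery : continuous G ->
  exists2 lam0 : R, 0 < lam0 & exists2 C : R, 0 < C &
  forall lam z M, 0 < lam -> lam <= lam0 -> optimal Rad x G lam z M ->
  exists2 zt, Ztilde Rad x G zt & nzmask M = nzmask (x - G zt) /\
    forall i j, `|M i j - nzmask (x - G zt) i j| <= lam * C.
Proof.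
move=> G_cont.
have residual_cont : continuous (fun z => x - G z).
  by move=> z; apply: continuousB; [exact: cst_continuous | exact: G_cont].
have [e e_gt0 vanish] := compact_small_entries_vanish box_compact residual_cont.
have e2_gt0 : 0 < e ^+ 2 by exact: exprn_gt0.
pose N : R := #|{: 'I_m * 'I_n}|%:R.
have N1_gt0 : 0 < N + 1 by rewrite ltr_pwDr ?ler0n.
exists (e ^+ 2 / (N + 1)); first exact: divr_gt0.
exists (2 * e ^+ 2)^-1; first by rewrite invr_gt0 mulr_gt0.
move=> lam z M lam_gt0 lam_le M_opt.
have lam_small : lam * (N + 1) <= e ^+ 2 by rewrite -ler_pdivlMr.
have [zt zt_box zt_vanish] := vanish z M_opt.1.
exists zt; first exact: optimal_in_Ztilde lam_gt0 e_gt0 lam_small M_opt zt_box zt_vanish.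
split; first exact: nzmask_optimal lam_gt0 e_gt0 lam_small M_opt zt_box zt_vanish.
exact: optimal_dist_nzmask lam_gt0 e_gt0 lam_small M_opt zt_box zt_vanish.
Qed.

Definition optimal_selection (Mhat : R -> 'M[R]_(m, n)) :=
  forall lam, 0 < lam -> exists z, optimal Rad x G lam z (Mhat lam).

Lemma near0_optimal_selection : continuous G -> exists2 C : R, 0 < C &
  forall Mhat, optimal_selection Mhat -> \forall lam \near 0^'+, 0 < lam /\
    exists2 zt, Ztilde Rad x G zt &
      forall i j, `|Mhat lam i j - nzmask (x - G zt) i j| <= lam * C.
Proof.
move=> /small_lambda_recovery [lam0 lam0_gt0 [C C_gt0 recovery]].
exists C => // Mhat Mhat_opt; near=> lam.
have lam_gt0 : 0 < lam by near: lam; exact: nbhs_right_gt.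
have [z M_opt] := Mhat_opt lam lam_gt0.
have [|zt Zzt [_ dist_le]] := recovery _ _ _ lam_gt0 _ M_opt.
  by near: lam; exact: nbhs_right_le.
by split=> //; exists zt.
Unshelve. all: by end_near.
Qed.

Lemma dinf_Mtilde_cvg0 Mhat : continuous G -> optimal_selection Mhat ->
  (fun lam => dinf (Mhat lam) (Mtilde Rad x G)) @ 0^'+ --> 0.
Proof.
move=> /near0_optimal_selection [C C_gt0 near_dist] /near_dist near_Mhat.
apply: (cvg_at_right0_of_dist_le (C := C)); apply: filterS near_Mhat.
move=> lam [lam_gt0 [zt Zzt dist_le]].
have Mt_zt : Mtilde Rad x G (nzmask (x - G zt)) by exists zt.
rewrite sub0r normrN ger0_norm; last by apply: dinf_ge0; exists (nzmask (x - G zt)).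
apply: le_trans (dinf_le_linf _ Mt_zt) (linf_le _ _); first by rewrite mulr_ge0 ?ltW.
by move=> i j; rewrite 2!mxE.
Qed.

Lemma optimal_selection_cvg (zstar : 'rV[R]_d) Mhat : continuous G ->
  Ztilde Rad x G = [set zstar] -> optimal_selection Mhat ->
  Mhat @ 0^'+ --> nzmask (x - G zstar).
Proof.
move=> /near0_optimal_selection [C C_gt0 near_dist] Z_eq /near_dist near_Mhat.
apply: (cvg_at_right0_of_dist_le (C := C)); apply: filterS near_Mhat.
move=> lam [lam_gt0 [zt]]; rewrite Z_eq => <- dist_le.
rewrite distrC; apply: mx_norm_le; first by rewrite mulr_ge0 ?ltW.
by move=> i j; rewrite 2!mxE.
Qed.

End Problem.

Theorem theorem2 (R : realType) (m n d n0 : nat) (Rad : R)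
  (x : 'M[R]_(m, n)) (G : 'rV[R]_d -> 'M[R]_(m, n)) (zstar : 'rV[R]_d) :
  (0 < m)%N -> (0 < n)%N -> (0 < d)%N -> (0 < n0)%N -> 0 < Rad ->
  continuous G ->
  box Rad zstar -> (l0 (x - G zstar) <= n0)%N ->
  (* d_oo(Mhat(lambda), Mtilde) -> 0 as lambda -> 0+, for any selection of optimal M *)
  (forall Mhat : R -> 'M[R]_(m, n),
      (forall lam, 0 < lam -> exists z, optimal Rad x G lam z (Mhat lam)) ->
      (fun lam => dinf (Mhat lam) (Mtilde Rad x G)) @ 0^'+ --> 0) /\
  (exists lamt : R, 0 < lamt /\
     (forall lam, 0 < lam -> lam <= lamt -> forall z M, optimal Rad x G lam z M ->
        exists2 Mt, Mtilde Rad x G Mt & Mt = nzmask M) /\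
     (Ztilde Rad x G = [set zstar] ->
      forall lam, 0 < lam -> lam <= lamt -> forall z M, optimal Rad x G lam z M ->
        nzmask M = nzmask (x - G zstar))) /\
  (Ztilde Rad x G = [set zstar] ->
   forall Mhat : R -> 'M[R]_(m, n),
      (forall lam, 0 < lam -> exists z, optimal Rad x G lam z (Mhat lam)) ->
      Mhat @ 0^'+ --> nzmask (x - G zstar)).
Proof.
move=> _ _ _ _ _ G_cont _ _.
split; first by move=> Mhat; exact: dinf_Mtilde_cvg0.
split; last by move=> Z_eq Mhat; exact: optimal_selection_cvg.
have [lam0 lam0_gt0 [C _ recovery]] := small_lambda_recovery Rad x G_cont.
exists lam0; split=> //.
split=> [lam lam_gt0 lam_le z M M_opt|Z_eq lam lam_gt0 lam_le z M M_opt].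
  have [zt Zzt [-> _]] := recovery _ _ _ lam_gt0 lam_le M_opt.
  by exists (nzmask (x - G zt)) => //; exists zt.
have [zt + [-> _]] := recovery _ _ _ lam_gt0 lam_le M_opt.
by rewrite Z_eq => <-.
Qed.
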